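(* Let $G$ be a $2$-connected cubic multigraph. For every tombolo-cut $(U,\bar U)$ of $G$, the two edges of its cut-set share no endpoint.
   Context: Multigraphs are finite and loopless, parallel edges allowed. A cut of $G$ is a bipartition $(U,\bar U)$ of $V(G)$ with $\bar U=V(G)\setminus U$; its cut-set is the set of edges with one endpoint in $U$ and the other in $\bar U$. A tombolo-cut is a cut whose cut-set has exactly $2$ edges. *)

From mathcomp Require Import all_boot.
Set Implicit Arguments. Unset Strict Implicit. Unset Printing Implicit Defensive.

(* A finite multigraph with vertex type V and edge type E: every edge e has
   two endpoints [src e] and [tgt e]; parallel edges are allowed (distinct
   edges may have the same endpoints). *)
Section Multigraph.
Variables (V E : finType) (src tgt : E -> V).

Definition loopless : Prop := forall e : E, src e != tgt e.

Definition incident (e : E) (v : V) : bool := (src e == v) || (tgt e == v).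

Definition degree (v : V) : nat :=
  #|[set e | src e == v]| + #|[set e | tgt e == v]|.

Definition cubic : Prop := forall v : V, degree v = 3.

Definition adj_in (S : {set V}) : rel V :=
  fun x y => [&& x \in S, y \in S &
     [exists e : E, ((src e == x) && (tgt e == y)) || ((src e == y) && (tgt e == x))]].

Definition connected_on (S : {set V}) : Prop :=
  forall x y, x \in S -> y \in S -> connect (adj_in S) x y.

(* 2-connected (Diestel): more than 2 vertices, and G - X is connected for
   every vertex set X with |X| < 2 *)
Definition two_connected : Prop :=
  2 < #|V| /\ connected_on setT /\ forall v : V, connected_on [set~ v].

Definition cutset (U : {set V}) : {set E} :=
  [set e | (src e \in U) != (tgt e \in U)].

Definition tombolo_cut (U : {set V}) : Prop := #|cutset U| = 2.

End Multigraph.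

From mathcomp Require Import all_boot.
Set Implicit Arguments. Unset Strict Implicit. Unset Printing Implicit Defensive.

(* If both cut edges met at v, the third edge f at v would not be a cut edge,
   so the far ends of f and of e1 lie on opposite sides of the cut.  Joining
   them in G - v, which is connected, forces a cut edge avoiding v. *)

Lemma path_crossing (T : eqType) (r : rel T) (P : pred T) x p :
  path r x p -> P x != P (last x p) -> exists a b, r a b /\ P a != P b.
Proof.
elim: p x => [|y p IH] x /=; first by rewrite eqxx.
case/andP=> rxy pp Pxp.
have [Pxy|] := eqVneq (P x) (P y); last by exists x, y.
by apply: (IH y pp); rewrite -Pxy.
Qed.

Lemma connect_crossing (T : finType) (r : rel T) (P : pred T) x y :
  connect r x y -> P x != P y -> exists a b, r a b /\ P a != P b.
Proof. by case/connectP=> p pp ->; apply: path_crossing pp. Qed.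

Section Multigraph.
Variables (V E : finType) (src tgt : E -> V).

Definition opposite (e : E) (v : V) : V := if src e == v then tgt e else src e.

Lemma adj_in_crossing (S U : {set V}) a b :
  adj_in src tgt S a b -> (a \in U) != (b \in U) ->
  exists2 e, e \in cutset src tgt U & (src e \in S) && (tgt e \in S).
Proof.
case/and3P=> aS bS /existsP[e /orP[]/andP[/eqP srcE /eqP tgtE]] aUb;
  by exists e; rewrite ?inE srcE tgtE ?aS ?bS // eq_sym.
Qed.

Lemma connected_on_crossing (S U : {set V}) x y :
  connected_on src tgt S -> x \in S -> y \in S -> (x \in U) != (y \in U) ->
  exists2 e, e \in cutset src tgt U & (src e \in S) && (tgt e \in S).
Proof.
move=> connS xS yS xUy.
have [a [b [ab aUb]]] := connect_crossing (connS x y xS yS) xUy.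
exact: adj_in_crossing ab aUb.
Qed.

Lemma tombolo_cutsetE U e1 e2 :
  tombolo_cut src tgt U -> e1 \in cutset src tgt U -> e2 \in cutset src tgt U ->
  e1 != e2 -> cutset src tgt U = [set e1; e2].
Proof.
move=> cardU e1U e2U e12; apply/esym/eqP.
rewrite eqEcard cardU cards2 e12 andbT.
by apply/subsetP=> e; rewrite in_set2 => /orP[]/eqP->.
Qed.

Lemma opposite_in_cutset (U : {set V}) e v : incident src tgt e v ->
  (opposite e v \in U) = (v \in U) (+) (e \in cutset src tgt U).
Proof.
rewrite /opposite /incident inE.
by case: eqP => [<- _|_ /eqP <-]; case: (_ \in U); case: (_ \in U).
Qed.

Hypothesis no_loop : loopless src tgt.

Lemma opposite_neq e v : incident src tgt e v -> opposite e v != v.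
Proof.
rewrite /opposite /incident.
by case: eqP => [<- _|_ /eqP <-]; rewrite // eq_sym no_loop.
Qed.

Lemma card_incident v : #|[set e | incident src tgt e v]| = degree src tgt v.
Proof.
have -> : [set e | incident src tgt e v] =
          [set e | src e == v] :|: [set e | tgt e == v].
  by apply/setP=> e; rewrite !inE.
rewrite cardsU.
have -> : [set e | src e == v] :&: [set e | tgt e == v] = set0.
  apply/setP=> e; rewrite !inE; apply/negP=> /andP[/eqP srcE /eqP tgtE].
  by move: (no_loop e); rewrite srcE tgtE eqxx.
by rewrite cards0 subn0.
Qed.

Lemma cubic_incident_notin_pair v e1 e2 : cubic src tgt ->
  exists2 f, incident src tgt f v & f \notin [set e1; e2].
Proof.
move=> cub.
have : ~~ ([set e | incident src tgt e v] \subset [set e1; e2]).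
  apply/negP=> /subset_leq_card; rewrite card_incident cub.
  by rewrite cards2 ltnS ltnNge leq_b1.
by case/subsetPn=> f; rewrite inE; exists f.
Qed.

End Multigraph.

Theorem proposition10 (V E : finType) (src tgt : E -> V) :
  loopless src tgt ->
  cubic src tgt ->
  two_connected src tgt ->
  forall U : {set V}, tombolo_cut src tgt U ->
  forall e1 e2 : E, e1 \in cutset src tgt U -> e2 \in cutset src tgt U ->
  e1 != e2 ->
  forall v : V, ~~ (incident src tgt e1 v && incident src tgt e2 v).
Proof.
move=> no_loop cub [_ [_ conn_minus]] U tomb e1 e2 e1U e2U e12 v.
apply/negP=> /andP[e1v e2v].
have cutE := tombolo_cutsetE tomb e1U e2U e12.
have [f fv f_out] := cubic_incident_notin_pair no_loop v e1 e2 cub.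
have sides : (opposite src tgt f v \in U) != (opposite src tgt e1 v \in U).
  rewrite !opposite_in_cutset // e1U cutE (negbTE f_out) addbT addbF.
  by case: (v \in U).
have fS : opposite src tgt f v \in [set~ v] by rewrite in_setC1 opposite_neq.
have e1S : opposite src tgt e1 v \in [set~ v] by rewrite in_setC1 opposite_neq.
have [e eU /andP[srcS tgtS]] := connected_on_crossing (conn_minus v) fS e1S sides.
have ev : incident src tgt e v by move: eU; rewrite cutE in_set2 => /orP[]/eqP->.
by move: ev srcS tgtS; rewrite /incident !in_setC1 => /orP[]/eqP->; rewrite eqxx.
Qed.
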